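(* Let $F=\mathbb C(a,b)$ be the field of rational functions in two variables over $\mathbb C$ and $\epsilon=\frac{-1+i\sqrt3}{2}$. Let $D_3$ be the $F$-algebra generated by $x,y$ subject to $x^3=a$, $y^3=b$, $yx=\epsilon xy$ (a central division $F$-algebra of degree $3$), with the involution $\ast$ which fixes $a,b,x,y$ and acts on $\mathbb C$ by complex conjugation. Let $K=F(x)$, a $\ast$-invariant maximal subfield, with $1,y,y^2$ a right $K$-basis of $D_3$. Then: (i) the involution $\ast$ on $D_3$ is formally real; (ii) the involution $X^\#=A^{-1}X^\ast A$ on $M_3(K)$, where $X^\ast$ is the transpose with $\ast$ applied entrywise and $A=\begin{pmatrix}1&0&0\\0&0&b\\0&b&0\end{pmatrix}$ (which is the involution extending $\ast$ under the left regular representation $D_3\to M_3(K)$ with respect to $1,y,y^2$, so that $(D_3\otimes_F K)\cong(M_3(K),\#)$), is not formally real.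
   Context: An involution $\#$ on a ring $R$ is formally real if every finite sum of nonzero elements of the form $rr^\#$ ($r\in R$) is nonzero. *)

From HB Require Import structures.
From mathcomp Require Import all_boot all_order all_algebra.
From mathcomp Require Import fraction generic_quotient.
Set Implicit Arguments. Unset Strict Implicit. Unset Printing Implicit Defensive.
Import Order.TTheory GRing.Theory Num.Theory.
Local Open Scope ring_scope.

Definition formally_real (V : zmodType) (mul : V -> V -> V) (inv : V -> V) :=
  forall s : seq V, s != [::] ->
    (forall r, r \in s -> mul r (inv r) != 0) ->
    \sum_(r <- s) mul r (inv r) != 0.

Section RatFun.
Variable C : numClosedFieldType.

(* Rational functions in two variables over C: the fraction field of C[u][v].
   The inner variable u is ('X%:P), the outer variable v is 'X. *)
Definition RF := {fraction {poly {poly C}}}.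
Definition var_in : RF := tofrac ('X%:P).
Definition var_out : RF := tofrac 'X.

Definition conjP (p : {poly {poly C}}) : {poly {poly C}} :=
  map_poly (map_poly Num.conj) p.
Definition conjRF (q : RF) : RF :=
  let r := repr q in tofrac (conjP r.1) / tofrac (conjP r.2).

Definition constRF (c : C) : RF := tofrac (c%:P%:P).

Definition eps : C := (-1 + 'i * sqrtC 3) / 2.

Definition Fa : RF := var_in.
Definition Fb : RF := var_out.

(* ---------- D_3, concretely: an element is its coefficient array c with
   c i j the coefficient of x^i y^j (i,j < 3) over F; multiplication is
   determined by x^3 = a, y^3 = b, yx = eps xy, i.e.
   (x^i y^j)(x^k y^l) = eps^(jk) a^((i+k)/3) b^((j+l)/3) x^((i+k)%3) y^((j+l)%3). *)
Definition D3 := 'M[RF]_3.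

Definition D3x : D3 := \matrix_(i, j) ((i == 1%N :> nat) && (j == 0%N :> nat))%:R.
Definition D3y : D3 := \matrix_(i, j) ((i == 0%N :> nat) && (j == 1%N :> nat))%:R.

Definition D3mul (u v : D3) : D3 :=
  \matrix_(p, q) \sum_(i < 3) \sum_(j < 3) \sum_(k < 3) \sum_(l < 3)
     if ((((i : nat) + k) %% 3)%N == p) && ((((j : nat) + l) %% 3)%N == q) then
       u i j * v k l * constRF eps ^+ ((j : nat) * k)%N
         * Fa ^+ (((i : nat) + k) %/ 3)%N * Fb ^+ (((j : nat) + l) %/ 3)%N
     else 0.

(* The involution * : F-semilinear (conjugation on C, fixing a, b),
   anti-multiplicative, fixing x and y; hence
   (c x^i y^j)^* = c^* y^j x^i = c^* eps^(ij) x^i y^j. *)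
Definition D3star (u : D3) : D3 :=
  \matrix_(i, j) (conjRF (u i j) * constRF eps ^+ ((i : nat) * j)%N).

(* ---------- K = F(x) with x^3 = a, i.e. K = C(x, b) (a = x^3):
   inner var := x, outer var := b; * acts by conjugation on C fixing x, b. --- *)
Definition Kx : RF := var_in.
Definition Kb : RF := var_out.

Definition Amx : 'M[RF]_3 :=
  \matrix_(i, j) (if (i == 0%N :> nat) && (j == 0%N :> nat) then 1
                  else if ((i : nat) + j == 3)%N then Kb else 0).

Definition Mstar (X : 'M[RF]_3) : 'M[RF]_3 := map_mx conjRF X^T.

Definition Msharp (X : 'M[RF]_3) : 'M[RF]_3 := invmx Amx *m Mstar X *m Amx.

End RatFun.

(* (i) Formal reality of * on D_3 is a leading-term argument.  After clearing
   denominators, an element of D_3 is a 3x3 array V of polynomials in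
   C[a][b], the entry V i j standing for V i j (x^3, y^3) x^i y^j.  Order the
   monomials x^X y^Y lexicographically by (Y, X) and call the exponent pair of
   the leading monomial of an entry its key.  The leading term of a product of
   two terms is the product of the leading terms up to a power of eps, and the
   involution conjugates leading coefficients.  Hence, if K is the largest key
   occurring in a family V_1, ..., V_n, the coefficient of x^(2 K.2) y^(2 K.1)
   in V_1 V_1^* + ... + V_n V_n^* is a power of eps times the sum of the
   |lc|^2 over the entries of key K, which is positive.

   (ii) For #, a direct computation gives E00 E00^# = E00 and
   Rw Rw^# = -2 E00 with Rw = e_01 - b e_02, so two copies of E00 and one of
   Rw have nonzero norms summing to zero. *)

From HB Require Import structures.
From mathcomp Require Import all_boot all_order all_algebra.
From mathcomp Require Import fraction generic_quotient zify.
Import Order.TTheory GRing.Theory Num.Theory.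
Set Implicit Arguments. Unset Strict Implicit. Unset Printing Implicit Defensive.
Local Open Scope ring_scope.

Section Conjugation.
Local Open Scope quotient_scope.
Variable C : numClosedFieldType.
Local Notation P := {poly {poly C}}.
Local Notation RF := (RF C).

Lemma conjPM : {morph @conjP C : p q / p * q}.
Proof. by move=> p q; rewrite /conjP rmorphM. Qed.

Lemma conjP_eq0 (p : P) : (conjP p == 0) = (p == 0).
Proof.
rewrite /conjP -!size_poly_eq0 size_map_inj_poly ?rmorph0 //.
exact: map_poly_inj.
Qed.

Lemma frac_repr (f : RF) : f = tofrac (repr f).1 / tofrac (repr f).2.
Proof.
have pi_mul_den (x : {ratio P}) : (\pi_(RF) x : RF) * tofrac \d_x = tofrac \n_x.
  unlock tofrac; rewrite !piE; apply/eqmodP.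
  rewrite /= /FracField.equivf /FracField.mulf.
  by rewrite !numden_Ratio ?mulf_neq0 ?oner_neq0 ?denom_ratioP // !mulr1 mulrC.
have den_ne0 : tofrac (repr f).2 != 0 :> RF by rewrite tofrac_eq0 denom_ratioP.
by rewrite -[f in LHS]reprK -pi_mul_den mulfK.
Qed.

(* conjRF does not depend on the representative: it conjugates numerator and
   denominator of any fraction representation.  Hence it is multiplicative. *)
Lemma conjRF_frac (p q : P) : q != 0 ->
  conjRF (tofrac p / tofrac q) = tofrac (conjP p) / tofrac (conjP q).
Proof.
move=> q_ne0; rewrite /conjRF; set f := tofrac p / tofrac q.
have : tofrac (repr f).1 / tofrac (repr f).2 == tofrac p / tofrac q :> RF.
  by rewrite -frac_repr.
rewrite eqr_div ?tofrac_eq0 ?denom_ratioP // -!tofracM tofrac_eq => /eqP cross.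
apply/eqP; rewrite eqr_div ?tofrac_eq0 ?conjP_eq0 ?denom_ratioP //.
by rewrite -!tofracM tofrac_eq -!conjPM cross.
Qed.

Lemma conjRF_tofrac (p : P) : conjRF (tofrac p) = tofrac (conjP p).
Proof.
have := @conjRF_frac p 1 (oner_neq0 _).
by rewrite /conjP !rmorph1 !divr1.
Qed.

Lemma conjRFM : {morph @conjRF C : f g / f * g}.
Proof.
move=> f g; rewrite [f]frac_repr [g]frac_repr mulf_div -!tofracM.
rewrite !conjRF_frac ?mulf_neq0 ?denom_ratioP //.
by rewrite !conjPM !tofracM mulf_div.
Qed.

End Conjugation.

Section Bidegree.
Variable C : numClosedFieldType.
Local Notation P := {poly {poly C}}.

(* For u in C[a][b]: db u is its degree in b, da u the degree in a of its
   leading b-coefficient, and lc2 u the leading coefficient of the latter;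
   coef2 u n m is the coefficient of b^n a^m. *)
Definition db (u : P) : nat := (size u).-1.
Definition da (u : P) : nat := (size (lead_coef u)).-1.
Definition lc2 (u : P) : C := lead_coef (lead_coef u).
Definition coef2 (u : P) (n m : nat) : C := (u`_n)`_m.

Lemma coef20 n m : coef2 0 n m = 0.
Proof. by rewrite /coef2 !coef0. Qed.

Lemma coef2_sum (I : Type) (r : seq I) (F : I -> P) n m :
  coef2 (\sum_(i <- r) F i) n m = \sum_(i <- r) coef2 (F i) n m.
Proof. by rewrite /coef2 !coef_sum. Qed.

Lemma lc2_eq0 (u : P) : (lc2 u == 0) = (u == 0).
Proof. by rewrite /lc2 !lead_coef_eq0. Qed.

Lemma size_mul_pred (R : idomainType) (p q : {poly R}) : p != 0 -> q != 0 ->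
  (size (p * q)).-1 = ((size p).-1 + (size q).-1)%N.
Proof.
move=> p_ne0 q_ne0; rewrite size_mul //.
move: p_ne0 q_ne0; rewrite -!size_poly_gt0.
by case: (size p) => // m _; case: (size q) => // k _; rewrite addSn addnS.
Qed.

Lemma dbM (u v : P) : u != 0 -> v != 0 -> db (u * v) = (db u + db v)%N.
Proof. exact: size_mul_pred. Qed.

Lemma daM (u v : P) : u != 0 -> v != 0 -> da (u * v) = (da u + da v)%N.
Proof. by move=> u_ne0 v_ne0; rewrite /da lead_coefM size_mul_pred ?lead_coef_eq0. Qed.

Lemma lc2M (u v : P) : lc2 (u * v) = lc2 u * lc2 v.
Proof. by rewrite /lc2 !lead_coefM. Qed.

Definition monoP (c : C) (e f : nat) : P := c%:P%:P * ('X%:P) ^+ e * 'X ^+ f.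

Lemma monoP_neq0 (c : C) e f : c != 0 -> monoP c e f != 0.
Proof. by move=> c_ne0; rewrite !mulf_neq0 ?expf_neq0 ?polyC_eq0 ?polyX_eq0. Qed.

Lemma monoP_bidegree (c : C) e f : c != 0 ->
  [/\ db (monoP c e f) = f, da (monoP c e f) = e & lc2 (monoP c e f) = c].
Proof.
move=> c_ne0.
have Xa_ne0 : ('X%:P : P) ^+ e != 0 by rewrite expf_neq0 ?polyC_eq0 ?polyX_eq0.
have ca_ne0 : c%:P%:P * ('X%:P : P) ^+ e != 0 by rewrite mulf_neq0 ?polyC_eq0.
have Xb_ne0 : ('X : P) ^+ f != 0 by rewrite expf_neq0 ?polyX_eq0.
rewrite /monoP dbM ?daM ?lc2M ?dbM ?daM ?lc2M ?polyC_eq0 //.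
rewrite /db /da /lc2 -rmorphXn !lead_coefC !lead_coefXn !size_polyC !size_polyXn.
have Xn_ne0 : ('X^e : {poly C}) != 0 by rewrite expf_neq0 ?polyX_eq0.
rewrite polyC_eq0 c_ne0 Xn_ne0 lead_coef1 !mulr1.
by split => //; rewrite oner_neq0 /= add0n addn0.
Qed.

Lemma monoP00 (c : C) : monoP c 0 0 = c%:P%:P.
Proof. by rewrite /monoP !expr0 !mulr1. Qed.

Lemma map_conjK : cancel (map_poly (Num.conj : C -> C)) (map_poly Num.conj).
Proof. by move=> p; rewrite -map_poly_comp map_poly_id // => x _ /=; rewrite conjCK. Qed.

Lemma conjP_bidegree (u : P) :
  [/\ db (conjP u) = db u, da (conjP u) = da u & lc2 (conjP u) = (lc2 u)^*].
Proof.
have conj_inj : injective (Num.conj : C -> C) := can_inj (@conjCK C).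
have map_conj_inj := can_inj map_conjK.
have lead_conj : lead_coef (conjP u) = map_poly Num.conj (lead_coef u).
  by rewrite /conjP lead_coef_map_inj ?rmorph0.
rewrite /db /da /lc2 lead_conj /conjP !size_map_inj_poly ?rmorph0 //.
by rewrite lead_coef_map_inj ?rmorph0.
Qed.

Lemma coef2_low (u : P) (n m : nat) :
  ((db u < n) || ((db u == n) && (da u < m)))%N -> coef2 u n m = 0.
Proof.
rewrite /coef2 /db /da => /orP[|/andP[/eqP <-]] ltn.
  have u_n0 : (size u <= n)%N by move: ltn; case: (size u).
  by rewrite (nth_default 0 u_n0) coef0.
by rewrite nth_default //; move: ltn; case: (size _).
Qed.
End Bidegree.

(* Exponent pairs (deg_y, deg_x), ordered lexicographically. *)
Notation lex := (nat *l nat)%type.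

Definition addk (x y : lex) : lex := (x.1 + y.1, x.2 + y.2)%N.

Lemma addk_le (x y z : lex) : (x <= z)%O -> (y <= z)%O -> (addk x y <= addk z z)%O.
Proof.
case: x y z => [x1 x2] [y1 y2] [z1 z2]; rewrite !lexi_pair /= !leEnat.
move=> /andP[le1 /implyP le2] /andP[le3 /implyP le4]; apply/andP; split; first lia.
apply/implyP => ge; have /le2 l2 : (z1 <= x1)%N by lia.
have /le4 l4 : (z1 <= y1)%N by lia.
lia.
Qed.

Lemma addk_eq (x y z : lex) : (x <= z)%O -> (y <= z)%O ->
  (addk x y == addk z z) = (x == z) && (y == z).
Proof.
case: x y z => [x1 x2] [y1 y2] [z1 z2]; rewrite /addk !lexi_pair /= !leEnat !xpair_eqE.
move=> /andP[le1 /implyP le2] /andP[le3 /implyP le4].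
apply/idP/idP => [/andP[/eqP e1 /eqP e2]|]; last first.
  by case/andP => /andP[/eqP-> /eqP->] /andP[/eqP-> /eqP->]; rewrite !eqxx.
have /le2 l2 : (z1 <= x1)%N by lia.
have /le4 l4 : (z1 <= y1)%N by lia.
have [-> ->] : x1 = z1 /\ x2 = z2 by lia.
have [-> ->] : y1 = z1 /\ y2 = z2 by lia.
by rewrite !eqxx.
Qed.

Section Keys.
Variable C : numClosedFieldType.
Local Notation P := {poly {poly C}}.

(* Entry u at position (i, j) of D_3 stands for u(x^3, y^3) x^i y^j; its key
   is the exponent pair (deg_y, deg_x) of its lexicographically leading
   monomial. *)
Definition key (u : P) (i j : nat) : lex := (3 * db u + j, 3 * da u + i)%N.

Definition mod3 (n : nat) : 'I_3 := Ordinal (ltn_pmod n (isT : (0 < 3)%N)).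

Lemma key_mod3 (u : P) (i j : 'I_3) :
  mod3 (key u i j).2 = i /\ mod3 (key u i j).1 = j.
Proof.
by split; apply: val_inj; rewrite /= mulnC modnMDl modn_small.
Qed.

Lemma coef2_key (u : P) (p q : nat) (K : lex) :
  p = (K.2 %% 3)%N -> q = (K.1 %% 3)%N -> (key u p q <= K)%O ->
  coef2 u (K.1 %/ 3) (K.2 %/ 3) = if key u p q == K then lc2 u else 0.
Proof.
case: K => [Y X] /= -> ->; rewrite lexi_pair /key /= !leEnat xpair_eqE.
have dY := divn_eq Y 3; have mY := ltn_pmod Y (isT : (0 < 3)%N).
have dX := divn_eq X 3; have mX := ltn_pmod X (isT : (0 < 3)%N).
move=> /andP[le1 /implyP le2].
have [/andP[/eqP eY /eqP eX]|neq] := boolP (_ && _).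
  have -> : (Y %/ 3 = db u)%N by lia.
  by have -> : (X %/ 3 = da u)%N by lia.
apply: coef2_low; have [//|ge] := ltnP (db u) (Y %/ 3).
have eY : db u = (Y %/ 3)%N by lia.
have /le2 le2' : (Y <= 3 * db u + Y %% 3)%N by lia.
rewrite eY eqxx /=; move: neq; rewrite negb_and eY => /orP[] /eqP neq; lia.
Qed.
End Keys.

Section PolynomialModel.
Variable C : numClosedFieldType.
Local Notation P := {poly {poly C}}.

(* eps is nonzero: otherwise i sqrt 3 = 1, and squaring gives -3 = 1. *)
Lemma eps_neq0 : eps C != 0.
Proof.
rewrite /eps mulf_eq0 invr_eq0 pnatr_eq0 orbF addrC subr_eq0.
apply/eqP => i_sqrt3; have /eqP := congr1 (fun z => z ^+ 2) i_sqrt3.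
rewrite exprMn sqrCi sqrtCK expr1n mulN1r -subr_eq0 -opprD oppr_eq0.
by rewrite natr1 pnatr_eq0.
Qed.

(* D_3 with coefficients in C[a][b] instead of C(a,b): the term of the product
   of x^i y^j and x^k y^l, and the involution, entrywise. *)
Definition Pterm (U V : 'M[P]_3) (i j k l : 'I_3) : P :=
  U i j * V k l * monoP (eps C ^+ (j * k)) ((i + k) %/ 3) ((j + l) %/ 3).

Definition Pmul (U V : 'M[P]_3) : 'M[P]_3 :=
  \matrix_(p, q) \sum_(i < 3) \sum_(j < 3) \sum_(k < 3) \sum_(l < 3)
     if ((((i : nat) + k) %% 3)%N == p) && ((((j : nat) + l) %% 3)%N == q) then
       Pterm U V i j k l else 0.

Definition Pstar (U : 'M[P]_3) : 'M[P]_3 :=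
  \matrix_(i, j) (conjP (U i j) * (eps C ^+ (i * j))%:P%:P).

Lemma Pterm_eq0 (U V : 'M[P]_3) (i j k l : 'I_3) :
  (U i j == 0) || (V k l == 0) -> Pterm U V i j k l = 0.
Proof. by case/orP => /eqP zero; rewrite /Pterm zero ?mul0r ?mulr0 ?mul0r. Qed.

Lemma Pterm_key (U V : 'M[P]_3) (i j k l : 'I_3) : U i j != 0 -> V k l != 0 ->
  key (Pterm U V i j k l) ((i + k) %% 3) ((j + l) %% 3) =
  addk (key (U i j) i j) (key (V k l) k l).
Proof.
move=> Uij_ne0 Vkl_ne0; have eps_ne0 := expf_neq0 (j * k) eps_neq0.
have [db_m da_m _] := monoP_bidegree ((i + k) %/ 3) ((j + l) %/ 3) eps_ne0.
have m_ne0 := monoP_neq0 ((i + k) %/ 3) ((j + l) %/ 3) eps_ne0.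
have UV_ne0 : U i j * V k l != 0 by rewrite mulf_neq0.
rewrite /key /addk /Pterm dbM // dbM // daM // daM // db_m da_m /=.
have := divn_eq (i + k) 3; have := divn_eq (j + l) 3.
by move=> ? ?; congr (_, _); lia.
Qed.

Lemma Pterm_lc2 (U V : 'M[P]_3) (i j k l : 'I_3) :
  lc2 (Pterm U V i j k l) = lc2 (U i j) * lc2 (V k l) * eps C ^+ (j * k).
Proof.
have eps_ne0 := expf_neq0 (j * k) eps_neq0.
have [_ _ lc2_m] := monoP_bidegree ((i + k) %/ 3) ((j + l) %/ 3) eps_ne0.
by rewrite /Pterm lc2M lc2M lc2_m.
Qed.

Lemma Pstar_eq0 (U : 'M[P]_3) i j : (Pstar U i j == 0) = (U i j == 0).
Proof.
by rewrite mxE mulf_eq0 !polyC_eq0 expf_eq0 (negbTE eps_neq0) andbF orbF conjP_eq0.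
Qed.

Lemma Pstar_key (U : 'M[P]_3) (i j : 'I_3) : U i j != 0 ->
  key (Pstar U i j) i j = key (U i j) i j.
Proof.
move=> Uij_ne0; have c_ne0 := expf_neq0 (i * j) eps_neq0.
have [db_c da_c _] := monoP_bidegree 0 0 c_ne0; rewrite monoP00 in db_c da_c.
have [db_conj da_conj _] := conjP_bidegree (U i j).
by rewrite /key mxE dbM ?daM ?conjP_eq0 ?polyC_eq0 // db_c da_c db_conj da_conj !addn0.
Qed.

Lemma Pstar_lc2 (U : 'M[P]_3) (i j : 'I_3) :
  lc2 (Pstar U i j) = (lc2 (U i j))^* * eps C ^+ (i * j).
Proof.
have [_ _ lc2_conj] := conjP_bidegree (U i j).
by rewrite mxE lc2M lc2_conj /lc2 !lead_coefC.
Qed.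

End PolynomialModel.

Lemma sum_delta (R : nmodType) (I : finType) (i0 : I) (F : I -> R) :
  (forall i, i != i0 -> F i = 0) -> \sum_i F i = F i0.
Proof. by move=> F0; rewrite (bigD1 i0) //= big1 ?addr0. Qed.

Lemma sum4_delta (R : nmodType) (F : 'I_3 -> 'I_3 -> 'I_3 -> 'I_3 -> R) a b c d :
  (forall i j k l, ~~ [&& i == a, j == b, k == c & l == d] -> F i j k l = 0) ->
  \sum_i \sum_j \sum_k \sum_l F i j k l = F a b c d.
Proof.
move=> F0; rewrite (sum_delta (i0 := a)) => [|i /negbTE ia]; last first.
  by do 3!(apply: big1 => ? _); rewrite F0 ?ia.
rewrite (sum_delta (i0 := b)) => [|j /negbTE jb]; last first.
  by do 2!(apply: big1 => ? _); rewrite F0 ?eqxx ?jb.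
rewrite (sum_delta (i0 := c)) => [|k /negbTE kc]; last first.
  by apply: big1 => ? _; rewrite F0 ?eqxx ?kc.
by rewrite (sum_delta (i0 := d)) => // l /negbTE ld; rewrite F0 ?eqxx ?ld.
Qed.

Section TopCoefficient.
Variable C : numClosedFieldType.
Local Notation P := {poly {poly C}}.

(* If every key of V is at most K, the coefficient of the monomial with
   exponents 2K in V V^* only comes from the entry at the position of K:
   it is |lc2|^2 (times a power of eps) if that entry has key K, else 0. *)
Definition top_norm (V : 'M[P]_3) (K : lex) : C :=
  if key (V (mod3 K.2) (mod3 K.1)) (mod3 K.2) (mod3 K.1) == K
  then lc2 (V (mod3 K.2) (mod3 K.1)) * (lc2 (V (mod3 K.2) (mod3 K.1)))^* else 0.

(* The power of eps produced by x^i y^j (x^i y^j)^* at the position of K. *)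
Definition eps_twist (K : lex) : C :=
  eps C ^+ (mod3 K.2 * mod3 K.1) * eps C ^+ (mod3 K.1 * mod3 K.2).

Variables (V : 'M[P]_3) (K : lex).
Hypothesis V_le_K : forall i j : 'I_3, V i j != 0 -> (key (V i j) i j <= K)%O.
Local Notation K2 := (addk K K).

Lemma term_top_coef (i j k l : 'I_3) :
  (((i + k) %% 3)%N == mod3 K2.2) && (((j + l) %% 3)%N == mod3 K2.1) ->
  coef2 (Pterm V (Pstar V) i j k l) (K2.1 %/ 3) (K2.2 %/ 3) =
  if [&& i == mod3 K.2, j == mod3 K.1, k == mod3 K.2 & l == mod3 K.1]
  then top_norm V K * eps_twist K else 0.
Proof.
move=> /andP[/eqP pos_p /eqP pos_q].
have [Vij0|Vij_ne0] := eqVneq (V i j) 0.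
  rewrite Pterm_eq0 ?coef20 //; last by rewrite Vij0 eqxx.
  case: and4P => // -[/eqP ei /eqP ej _ _]; rewrite /top_norm -ei -ej Vij0.
  by rewrite /lc2 lead_coef0 lead_coef0 mul0r if_same mul0r.
have [Vkl0|Vkl_ne0] := eqVneq (V k l) 0.
  rewrite Pterm_eq0 ?coef20 //; last by rewrite Pstar_eq0 Vkl0 eqxx orbT.
  case: and4P => // -[_ _ /eqP ek /eqP el]; rewrite /top_norm -ek -el Vkl0.
  by rewrite /lc2 lead_coef0 lead_coef0 mul0r if_same mul0r.
have Vkl_key := Pstar_key Vkl_ne0; have Vkl_le := V_le_K Vkl_ne0.
have Vij_le := V_le_K Vij_ne0.
rewrite (coef2_key pos_p pos_q); last first.
  by rewrite Pterm_key ?Pstar_eq0 // Vkl_key addk_le.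
rewrite Pterm_key ?Pstar_eq0 // Vkl_key addk_eq //.
case: ifP => [/andP[/eqP eij /eqP ekl]|not_top].
  have [ei ej] := key_mod3 (V i j) i j; have [ek el] := key_mod3 (V k l) k l.
  rewrite eij in ei ej; rewrite ekl in ek el.
  have -> : k = i by rewrite -ek -ei.
  have -> : l = j by rewrite -el -ej.
  rewrite /top_norm /eps_twist ei ej eij !eqxx /= Pterm_lc2 Pstar_lc2.
  by rewrite !mulrA.
case: and4P => // -[/eqP ei /eqP ej /eqP ek /eqP el].
move: not_top; rewrite /top_norm ek el -ei -ej => /negbT; rewrite andbb => /negbTE->.
by rewrite mul0r.
Qed.

Lemma norm_top_coef :
  coef2 (Pmul V (Pstar V) (mod3 K2.2) (mod3 K2.1)) (K2.1 %/ 3) (K2.2 %/ 3) =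
  top_norm V K * eps_twist K.
Proof.
pose T i j k l := if [&& i == mod3 K.2, j == mod3 K.1, k == mod3 K.2 & l == mod3 K.1]
                  then top_norm V K * eps_twist K else 0.
have -> : top_norm V K * eps_twist K = T (mod3 K.2) (mod3 K.1) (mod3 K.2) (mod3 K.1).
  by rewrite /T !eqxx.
rewrite -(sum4_delta (F := T)) => [|i j k l /negbTE ne]; last by rewrite /T ne.
rewrite mxE coef2_sum; apply: eq_bigr => i _; rewrite coef2_sum; apply: eq_bigr => j _.
rewrite coef2_sum; apply: eq_bigr => k _; rewrite coef2_sum; apply: eq_bigr => l _.
case: ifP => [pos|not_pos]; first exact: term_top_coef.
rewrite coef20 /T; case: and4P => // -[/eqP ei /eqP ej /eqP ek /eqP el].
by move: not_pos; rewrite ei ej ek el /= !modnDm !eqxx.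
Qed.
End TopCoefficient.

Section LeadingTerm.
Variable C : numClosedFieldType.
Local Notation P := {poly {poly C}}.

Lemma eps_twist_neq0 (K : lex) : eps_twist C K != 0.
Proof. by rewrite mulf_neq0 ?expf_neq0 ?eps_neq0. Qed.

Lemma top_norm_ge0 (V : 'M[P]_3) (K : lex) : 0 <= top_norm V K.
Proof. by rewrite /top_norm; case: ifP => _; rewrite ?mul_conjC_ge0. Qed.

(* Compare the coefficients of the
   monomial with exponents 2K, for K the largest key of all entries. *)
Lemma sum_norms_neq0 (n : nat) (V : 'I_n -> 'M[P]_3) :
  (exists t, V t != 0) -> \sum_t Pmul (V t) (Pstar (V t)) != 0.
Proof.
case=> t0 /matrix0Pn[i1 [j1 nz1]].
pose nz (x : 'I_n * 'I_3 * 'I_3) := V x.1.1 x.1.2 x.2 != 0.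
pose kx (x : 'I_n * 'I_3 * 'I_3) : lex := key (V x.1.1 x.1.2 x.2) x.1.2 x.2.
case: (@arg_maxP _ _ _ (t0, i1, j1) nz kx nz1) => -[[tm im] jm]; rewrite /nz /kx /=.
set K := key (V tm im jm) im jm => nz_m K_max.
have V_le_K t i j : V t i j != 0 -> (key (V t i j) i j <= K)%O.
  by move=> nz_tij; exact: (K_max (t, i, j)).
have top_pos : top_norm (V tm) K != 0.
  have [pos_i pos_j] := key_mod3 (V tm im jm) im jm; rewrite -/K in pos_i pos_j.
  by rewrite /top_norm pos_i pos_j eqxx mulf_neq0 ?conjC_eq0 ?lc2_eq0.
apply/eqP => sum0.
have := congr1 (fun M : 'M[P]_3 => coef2 (M (mod3 (addk K K).2) (mod3 (addk K K).1))
                               ((addk K K).1 %/ 3) ((addk K K).2 %/ 3)) sum0.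
rewrite /= summxE coef2_sum mxE coef20.
under eq_bigr => t _ do rewrite (norm_top_coef (V_le_K t)).
rewrite -mulr_suml => /eqP; rewrite mulf_eq0 (negbTE (eps_twist_neq0 K)) orbF.
rewrite psumr_eq0 => [/allP/(_ tm (mem_index_enum _))|t _]; last exact: top_norm_ge0.
by rewrite (negbTE top_pos).
Qed.
End LeadingTerm.

Section FormallyReal.
Variable C : numClosedFieldType.
Local Notation P := {poly {poly C}}.
Local Notation RF := (RF C).

Definition toD (U : 'M[P]_3) : D3 C := map_mx (@tofrac P) U.

Lemma toD_inj : injective toD.
Proof.
move=> U U' /matrixP eqUU'; apply/matrixP => i j.
by have /eqP := eqUU' i j; rewrite !mxE tofrac_eq => /eqP.
Qed.

Lemma toD0 : toD 0 = 0.
Proof. by apply/matrixP => i j; rewrite !mxE tofrac0. Qed.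

Lemma toD_sum (I : Type) (r : seq I) (F : I -> 'M[P]_3) :
  toD (\sum_(i <- r) F i) = \sum_(i <- r) toD (F i).
Proof.
by apply: (big_morph toD) => [U U'|]; apply/matrixP => i j; rewrite !mxE ?tofracD.
Qed.

Lemma tofrac_monoP (c : C) e f :
  tofrac (monoP c e f) = constRF c * Fa C ^+ e * Fb C ^+ f.
Proof. by rewrite /monoP !tofracM !tofracXn. Qed.

Lemma constRFX (c : C) n : constRF (c ^+ n) = constRF c ^+ n.
Proof. by rewrite /constRF !rmorphXn. Qed.

Lemma toD_Pmul (U V : 'M[P]_3) : toD (Pmul U V) = D3mul (toD U) (toD V).
Proof.
have tofrac_sum := big_morph _ (@tofracD P) (@tofrac0 P).
apply/matrixP => p q; rewrite !mxE tofrac_sum; apply: eq_bigr => i _.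
rewrite tofrac_sum; apply: eq_bigr => j _; rewrite tofrac_sum; apply: eq_bigr => k _.
rewrite tofrac_sum; apply: eq_bigr => l _; case: ifP => _; last exact: tofrac0.
by rewrite /Pterm !mxE tofracM tofracM tofrac_monoP constRFX !mulrA.
Qed.

Lemma toD_Pstar (U : 'M[P]_3) : toD (Pstar U) = D3star (toD U).
Proof.
apply/matrixP => i j; rewrite !mxE tofracM conjRF_tofrac.
by rewrite -[tofrac _%:P%:P]/(constRF _) constRFX.
Qed.

Lemma D3mul_scale (c c' : RF) (u v : D3 C) :
  D3mul (c *: u) (c' *: v) = (c * c') *: D3mul u v.
Proof.
apply/matrixP => p q; rewrite !mxE mulr_sumr; apply: eq_bigr => i _.
rewrite mulr_sumr; apply: eq_bigr => j _; rewrite mulr_sumr; apply: eq_bigr => k _.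
rewrite mulr_sumr; apply: eq_bigr => l _; case: ifP => _; last by rewrite mulr0.
by rewrite !mxE !mulrA [c * _ * c']mulrAC.
Qed.

Lemma D3star_scale (c : RF) (u : D3 C) : D3star (c *: u) = conjRF c *: D3star u.
Proof. by apply/matrixP => i j; rewrite !mxE conjRFM mulrA. Qed.

Lemma D3mul0l (v : D3 C) : D3mul 0 v = 0.
Proof.
apply/matrixP => p q; rewrite !mxE.
apply: big1 => i _; apply: big1 => j _; apply: big1 => k _; apply: big1 => l _.
by case: ifP => _ //; rewrite mxE !mul0r.
Qed.

Lemma common_denominator (I : finType) (f : I -> RF) :
  exists2 D : P, D != 0 & forall i, exists p : P, tofrac D * f i = tofrac p.
Proof.
pose den i := (repr (f i)).2; pose num i := (repr (f i)).1.
have den_ne0 i : den i != 0 by exact: denom_ratioP.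
exists (\prod_i den i); first by apply/prodf_neq0 => i _.
move=> i; exists ((\prod_(j | j != i) den j) * num i).
rewrite (bigD1 i) //= [f i]frac_repr -/(den i) -/(num i) !tofracM mulrAC.
by rewrite [tofrac (den i) * _]mulrC divfK ?tofrac_eq0 // mulrC.
Qed.

(* (i): the involution on D_3 is formally real.  After clearing denominators,
   a vanishing sum of norms would give one in the polynomial model. *)
Lemma D3_formally_real : formally_real (@D3mul C) (@D3star C).
Proof.
move=> s s_ne norms_ne0; pose r := tnth (in_tuple s).
have [D D_ne0 Dr] :=
  common_denominator (fun x : 'I_(size s) * 'I_3 * 'I_3 => r x.1.1 x.1.2 x.2).
have [g g_spec] := fin_all_exists Dr.
pose V t := \matrix_(i, j) g (t, i, j).
have toD_V t : toD (V t) = tofrac D *: r t.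
  by apply/matrixP => i j; rewrite !mxE -g_spec.
have [t0 V_ne0] : exists t, V t != 0.
  have s_gt0 : (0 < size s)%N by rewrite lt0n size_eq0.
  exists (Ordinal s_gt0); have r_in : r (Ordinal s_gt0) \in s by exact: mem_tnth.
  apply: contraNneq (norms_ne0 _ r_in) => /(congr1 toD); rewrite toD_V toD0.
  move/eqP; rewrite scalemx_eq0 tofrac_eq0 (negbTE D_ne0) => /eqP ->.
  by rewrite D3mul0l.
apply: contraNneq (sum_norms_neq0 (ex_intro _ t0 V_ne0)) => sum0.
apply/eqP/toD_inj; rewrite toD_sum toD0.
under eq_bigr => t _ do rewrite toD_Pmul toD_Pstar toD_V D3star_scale D3mul_scale.
by rewrite big_tnth in sum0; rewrite -scaler_sumr sum0 scaler0.
Qed.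
End FormallyReal.

Section NotFormallyReal.
Variable C : numClosedFieldType.
Local Notation P := {poly {poly C}}.
Local Notation RF := (RF C).
Local Notation b := (Kb C).

Lemma Kb_neq0 : b != 0.
Proof. by rewrite /Kb /var_out tofrac_eq0 polyX_eq0. Qed.

Lemma conjRF_fixed (p : P) : conjP p = p -> conjRF (tofrac p) = tofrac p.
Proof. by rewrite conjRF_tofrac => ->. Qed.

Lemma conjRF0 : conjRF (0 : RF) = 0.
Proof. by rewrite -tofrac0 conjRF_fixed // /conjP rmorph0. Qed.

Lemma conjRF1 : conjRF (1 : RF) = 1.
Proof. by rewrite -tofrac1 conjRF_fixed // /conjP rmorph1. Qed.

Lemma conjRF_oppKb : conjRF (- b) = - b.
Proof.
rewrite -tofracN conjRF_fixed // /conjP rmorphN; congr (- _); exact: map_polyX.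
Qed.

Lemma Mstar_fixed (X : 'M[RF]_3) :
  (forall i j, conjRF (X i j) = X i j) -> Mstar X = X^T.
Proof. by move=> fixX; apply/matrixP => i j; rewrite !mxE fixX. Qed.

(* Entrywise evaluation of a product of two explicit 3x3 matrices. *)
Ltac mx3_compute :=
  apply/matrixP; let i := fresh "i" in let j := fresh "j" in move=> i j;
  rewrite !mxE !big_ord_recl big_ord0 !mxE;
  case: i => [[|[|[|?]]] ?] //; case: j => [[|[|[|?]]] ?] //=.

Ltac mx3_simpl := rewrite ?(mulr0, mul0r, addr0, add0r, mulr1, mul1r).

Definition Ainv : 'M[RF]_3 :=
  \matrix_(i, j) (if (i == 0%N :> nat) && (j == 0%N :> nat) then 1
                  else if ((i : nat) + j == 3)%N then b^-1 else 0).

Lemma Amx_inv : invmx (Amx C) = Ainv.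
Proof.
have AAinv : Amx C *m Ainv = 1%:M.
  by mx3_compute; mx3_simpl; rewrite ?mulfV ?Kb_neq0.
have [A_unit _] := mulmx1_unit AAinv.
by rewrite -[invmx _]mulmx1 -AAinv mulmxA mulVmx // mul1mx.
Qed.

Definition E00 : 'M[RF]_3 :=
  \matrix_(i, j) ((i == 0%N :> nat) && (j == 0%N :> nat))%:R.

Definition Rw : 'M[RF]_3 :=
  \matrix_(i, j) (if (i == 0%N :> nat) then
                    (if (j == 1%N :> nat) then 1 else if (j == 2%N :> nat) then - b else 0)
                  else 0).

(* Rw *m A^-1, the matrix with first row (0, -1, b^-1). *)
Definition RwAinv : 'M[RF]_3 :=
  \matrix_(i, j) (if (i == 0%N :> nat) then
                    (if (j == 1%N :> nat) then -1 else if (j == 2%N :> nat) then b^-1 else 0)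
                  else 0).

Lemma E00_Amx : E00 *m Amx C = E00.
Proof. by mx3_compute; mx3_simpl. Qed.

Lemma E00_Ainv : E00 *m Ainv = E00.
Proof. by mx3_compute; mx3_simpl. Qed.

Lemma E00_E00T : E00 *m E00^T = E00.
Proof. by mx3_compute; mx3_simpl. Qed.

Lemma Rw_Ainv : Rw *m Ainv = RwAinv.
Proof. by mx3_compute; mx3_simpl; rewrite ?mulNr ?mulfV ?Kb_neq0. Qed.

Lemma RwAinv_RwT : RwAinv *m Rw^T = - 2%:R *: E00.
Proof.
mx3_compute; mx3_simpl; rewrite ?mulr0 //.
by rewrite mulrN mulVf ?Kb_neq0 // -opprD.
Qed.

Lemma E00_sharp : E00 *m Msharp E00 = E00.
Proof.
rewrite /Msharp Amx_inv Mstar_fixed; last first.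
  by move=> i j; rewrite mxE; case: (_ && _); rewrite ?conjRF1 ?conjRF0.
by rewrite !mulmxA E00_Ainv E00_E00T E00_Amx.
Qed.

Lemma Rw_sharp : Rw *m Msharp Rw = - 2%:R *: E00.
Proof.
rewrite /Msharp Amx_inv Mstar_fixed; last first.
  by move=> i j; rewrite mxE !(fun_if (@conjRF C)) conjRF1 conjRF0 conjRF_oppKb.
by rewrite !mulmxA Rw_Ainv RwAinv_RwT -scalemxAl E00_Amx.
Qed.

Lemma two_neq0 : 2%:R != 0 :> RF.
Proof. by rewrite -tofrac1 -tofracMn tofrac_eq0 -!polyC_natr !polyC_eq0 pnatr_eq0. Qed.

Lemma E00_neq0 : E00 != 0.
Proof. by apply/matrix0Pn; exists ord0, ord0; rewrite mxE oner_neq0. Qed.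

Lemma sharp_not_formally_real :
  ~ formally_real (fun X Y : 'M[RF]_3 => X *m Y) (@Msharp C).
Proof.
move=> /(_ [:: E00; E00; Rw] isT); rewrite !big_cons big_nil E00_sharp Rw_sharp.
have norms_neq0 r : r \in [:: E00; E00; Rw] -> r *m Msharp r != 0.
  rewrite !inE => /or3P[] /eqP->; rewrite ?E00_sharp ?Rw_sharp ?E00_neq0 //.
  by rewrite scalemx_eq0 negb_or oppr_eq0 two_neq0 E00_neq0.
move=> /(_ norms_neq0); rewrite addr0 addrA -mulr2n -scaler_nat -scalerDl.
by rewrite addrN scale0r eqxx.
Qed.

End NotFormallyReal.

Theorem mainTheorem8 (C : numClosedFieldType) :
  formally_real (@D3mul C) (@D3star C) /\
  ~ formally_real (fun X Y : 'M[RF C]_3 => X *m Y) (@Msharp C).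
Proof. split; [exact: D3_formally_real | exact: sharp_not_formally_real]. Qed.
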